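(* Define, for $n'\in\mathbb{N}_+$ and $n\in\{0,\dots,n'\}$, $\gamma_{n,n'}=\sum_{j=0}^{n}\binom{n'}{j}{\rm e}_{n'-j}$. Then the collection $(\gamma_{n,n'})_{n'\in\mathbb{N}_+,n\in\{0,\dots,n'\}}$ belongs to $\Gamma$ (i.e. satisfies the bound condition).
   Context: $\sigma(x)=\max(0,x)$; $\mathrm{RL}(n,n')$ ($n,n'\in\mathbb{N}_+$) is the set of maps $h:\mathbb{R}^n\to\mathbb{R}^{n'}$, $h(x)_i=\sigma(\langle x,w_i\rangle+b_i)$ for some $W\in\mathbb{R}^{n'\times n}$ with rows $w_i$, $b\in\mathbb{R}^{n'}$; convention: $\mathrm{RL}(0,n')$ are constant maps $\{0\}\to\mathbb{R}^{n'}$ with $\mathcal{H}_{n'}(\mathcal{S}_h)={\rm e}_0$. $S_h(x)_i=1$ iff $\langle x,w_i\rangle+b_i>0$ else $0$; $\mathcal{S}_h=\{S_h(x):x\in\mathbb{R}^n\}$; $|s|=\sum_is_i$. $V$: sequences $(v_j)_{j\in\mathbb{N}}$ of nonnegative integers with finite sum; ${\rm e}_i$ has $({\rm e}_i)_j=\delta_{ij}$; $v\preceq w$ iff $\sum_{j\ge J}v_j\le\sum_{j\ge J}w_j$ for all $J\in\mathbb{N}$; for finite families, $\max_i(v^{(i)})_J=\max_i\sum_{j\ge J}v^{(i)}_j-\max_i\sum_{j\ge J+1}v^{(i)}_j$. $\mathcal{H}_{n'}(\mathcal{S})=(|\{s\in\mathcal{S}:|s|=j\}|)_j$. $\Gamma$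 (bound condition): families $(\gamma_{n,n'})_{n'\in\mathbb{N}_+,n\in\{0,\dots,n'\}}$ in $V$ with (i) $\max\{\mathcal{H}_{n'}(\mathcal{S}_h):h\in\mathrm{RL}(n,n')\}\preceq\gamma_{n,n'}$ for all $n'\in\mathbb{N}_+$, $n\in\{0,\dots,n'\}$, and (ii) $n\le\tilde n\le n'\Rightarrow\gamma_{n,n'}\preceq\gamma_{\tilde n,n'}$. *)

From HB Require Import structures.
From mathcomp Require Import all_boot all_order all_algebra.
From mathcomp Require Import boolp reals.
Set Implicit Arguments. Unset Strict Implicit. Unset Printing Implicit Defensive.
Import Order.TTheory GRing.Theory Num.Theory.

(* An element v of V is represented by a finite list s : seq nat,
   with v_j = nth 0 s j (entries beyond the list are 0). *)
Definition V := seq nat.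
Definition vcoef (v : V) (j : nat) : nat := nth 0%N v j.

Definition tailV (J : nat) (v : V) : nat := sumn (drop J v).

Definition leV (v w : V) : Prop := forall J : nat, (tailV J v <= tailV J w)%N.

Definition eV (i : nat) : V := rcons (nseq i 0%N) 1%N.

Definition addV (v w : V) : V :=
  mkseq (fun j => vcoef v j + vcoef w j)%N (maxn (size v) (size w)).
Definition scaleV (c : nat) (v : V) : V := map (fun a => c * a)%N v.

Definition IsMaxV (A : V -> Prop) (m : V) : Prop :=
  exists M : nat -> nat,
    (forall J, (exists2 v, A v & tailV J v = M J) /\
               (forall v, A v -> (tailV J v <= M J)%N)) /\
    (forall J, vcoef m J = M J - M J.+1)%N.

(* A layer h in RL(n,n') (n >= 1) is given by weights W (rows w_i) and biases b.
   Its activation pattern S_h(x)_i = 1 iff <x,w_i> + b_i > 0. *)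
Definition pattern (R : realType) (n n' : nat) (W : 'I_n' -> 'I_n -> R)
  (b : 'I_n' -> R) (x : 'I_n -> R) : {ffun 'I_n' -> bool} :=
  [ffun i => (0 < \sum_(k < n) x k * W i k + b i)%R].

Definition patterns (R : realType) (n n' : nat) (W : 'I_n' -> 'I_n -> R)
  (b : 'I_n' -> R) : {set {ffun 'I_n' -> bool}} :=
  [set s | `[< exists x : 'I_n -> R, pattern W b x = s >]].

Definition weight (n' : nat) (s : {ffun 'I_n' -> bool}) : nat := #|[set i | s i]|.

Definition Hist (n' : nat) (S : {set {ffun 'I_n' -> bool}}) : V :=
  mkseq (fun j => #|[set s in S | weight s == j]|) n'.+1.

(* The set { H_{n'}(S_h) : h in RL(n,n') }, with the paper's convention
   that for n = 0 this is { e_0 }. *)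
Definition HvalsRL (R : realType) (n n' : nat) (v : V) : Prop :=
  if n == 0%N then v = eV 0
  else exists (W : 'I_n' -> 'I_n -> R) (b : 'I_n' -> R), v = Hist (patterns W b).

Definition InGamma (R : realType) (gam : nat -> nat -> V) : Prop :=
  (forall n' n : nat, (0 < n')%N -> (n <= n')%N ->
     exists m : V, IsMaxV (HvalsRL R n n') m /\ leV m (gam n n')) /\
  (forall n' n nt : nat, (0 < n')%N -> (n <= nt <= n')%N ->
     leV (gam n n') (gam nt n')).

Definition gammaB (n n' : nat) : V :=
  \big[addV/[::]]_(j < n.+1) scaleV 'C(n', j) (eV (n' - j)).

From mathcomp Require Import all_boot all_order all_algebra.
From mathcomp Require Import boolp reals.
From mathcomp Require Import zify ring lra.
Set Implicit Arguments. Unset Strict Implicit. Unset Printing Implicit Defensive.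
Import Order.TTheory GRing.Theory Num.Theory.

(* The J-th tail sum of H(S_h) counts the activation patterns of h
   with at most k = n' - J inactive neurons.  Forgetting the first neuron maps
   these patterns into the patterns of the remaining n' - 1 neurons, and a
   pattern has two preimages only if it is realised on both sides of the first
   neuron's hyperplane, hence (on the segment between the two witnesses) on the
   hyperplane itself, where the layer is a layer on n - 1 inputs with at most
   k - 1 inactive neurons.  Pascal's rule then bounds the count by
   sum_(j <= min(n, k)) C(n', j), which is at most the J-th tail sum of
   gamma_(n,n').  The maximum of all histograms exists since their tail sums are
   bounded and vanish beyond n'. *)

Lemma tailV_oversize J v : size v <= J -> tailV J v = 0.
Proof. by move=> le_v_J; rewrite /tailV drop_oversize. Qed.

Lemma tailVE J v : tailV J v = vcoef v J + tailV J.+1 v.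
Proof.
have [lt_J_v | le_v_J] := ltnP J (size v); first by rewrite /tailV (drop_nth 0 lt_J_v).
by rewrite !tailV_oversize ?(leq_trans le_v_J) // /vcoef nth_default.
Qed.

Lemma tailV_rec v (f : nat -> nat) :
    (forall J, size v <= J -> f J = 0) -> (forall J, f J = vcoef v J + f J.+1) ->
  forall J, tailV J v = f J.
Proof.
move=> f_oversize fS J; have [d lt_vJ_d] := ubnP (size v - J).
elim: d J lt_vJ_d => // d IHd J lt_vJ_d.
have [le_v_J | lt_J_v] := leqP (size v) J; first by rewrite tailV_oversize ?f_oversize.
by rewrite tailVE fS IHd //; lia.
Qed.

Lemma vcoef_addV v w j : vcoef (addV v w) j = vcoef v j + vcoef w j.
Proof.
rewrite /addV /vcoef; have [lt_j_vw | ] := ltnP j (maxn (size v) (size w)).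
  by rewrite nth_mkseq.
rewrite geq_max => /andP[le_v_j le_w_j].
by rewrite !nth_default ?size_mkseq ?geq_max ?le_v_j.
Qed.

Lemma vcoef_scaleV c v j : vcoef (scaleV c v) j = c * vcoef v j.
Proof.
rewrite /scaleV /vcoef; have [lt_j_v | le_v_j] := ltnP j (size v); first by rewrite (nth_map 0).
by rewrite !nth_default ?size_map ?muln0.
Qed.

Lemma size_eV i : size (eV i) = i.+1.
Proof. by rewrite size_rcons size_nseq. Qed.

Lemma vcoef_eV i j : vcoef (eV i) j = (i == j).
Proof. by rewrite /vcoef nth_rcons size_nseq nth_nseq if_same eq_sym; case: ltngtP. Qed.

Lemma tailV_addV J v w : tailV J (addV v w) = tailV J v + tailV J w.
Proof.
move: J; apply: tailV_rec => J.
  by rewrite size_mkseq geq_max => /andP[le_v_J le_w_J]; rewrite !tailV_oversize.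
by rewrite vcoef_addV [tailV J v]tailVE [tailV J w]tailVE addnACA.
Qed.

Lemma tailV_scaleV J c v : tailV J (scaleV c v) = c * tailV J v.
Proof.
move: J; apply: tailV_rec => J; first by rewrite size_map => /tailV_oversize ->; rewrite muln0.
by rewrite vcoef_scaleV [tailV J v]tailVE mulnDr.
Qed.

Lemma tailV_eV J i : tailV J (eV i) = (J <= i).
Proof. by move: J; apply: tailV_rec => J; rewrite ?size_eV ?vcoef_eV; lia. Qed.

Lemma tailV_gammaB J n n' :
  tailV J (gammaB n n') = \sum_(j < n.+1) 'C(n', j) * (J <= n' - j).
Proof.
rewrite /gammaB (big_morph (tailV J) (tailV_addV J) (@tailV_oversize J [::] (leq0n J))).
by apply: eq_bigr => j _; rewrite tailV_scaleV tailV_eV.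
Qed.

Lemma leV_gammaB n nt n' : n <= nt -> leV (gammaB n n') (gammaB nt n').
Proof.
move=> le_n_nt J; rewrite !tailV_gammaB.
rewrite (big_ord_widen nt.+1 (fun j => 'C(n', j) * (J <= n' - j)) (le_n_nt : n < nt.+1)).
by rewrite big_mkcond; apply: leq_sum => j _; case: ifP.
Qed.

Section MaxV.
Variables (A : V -> Prop) (g : V) (N : nat).
Hypothesis A_nonempty : exists v, A v.
Hypothesis size_A : forall v, A v -> size v <= N.
Hypothesis A_le_g : forall v, A v -> leV v g.

Let tails_at J t := `[< exists2 v, A v & tailV J v = t >].

Let tails_at_ex J : exists t, tails_at J t.
Proof. by have [v Av] := A_nonempty; exists (tailV J v); apply/asboolP; exists v. Qed.

Let tails_at_ub J t : tails_at J t -> t <= tailV J g.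
Proof. by move=> /asboolP[v Av <-]; apply: A_le_g. Qed.

Let M J := ex_maxn (tails_at_ex J) (tails_at_ub (J := J)).

Let MP J : (exists2 v, A v & tailV J v = M J) /\ (forall v, A v -> tailV J v <= M J).
Proof.
rewrite /M; case: ex_maxnP => t /asboolP[v Av tv] t_max.
by split=> [|w Aw]; [exists v | apply: t_max; apply/asboolP; exists w].
Qed.

Let M_oversize J : N <= J -> M J = 0.
Proof.
move=> le_N_J; have [[v Av <-] _] := MP J.
by rewrite tailV_oversize ?(leq_trans (size_A Av)).
Qed.

Let MS J : M J.+1 <= M J.
Proof.
have [[v Av <-] _] := MP J.+1.
by rewrite (leq_trans _ ((MP J).2 v Av)) // [tailV J v]tailVE leq_addl.
Qed.

Lemma IsMaxV_exists : exists m, IsMaxV A m /\ leV m g.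
Proof.
pose m := mkseq (fun J => M J - M J.+1) N.
have vcoef_m J : vcoef m J = M J - M J.+1.
  rewrite /vcoef; have [lt_J_N | le_N_J] := ltnP J N; first by rewrite nth_mkseq.
  by rewrite nth_default ?size_mkseq // !M_oversize ?(leq_trans le_N_J).
have tailV_m J : tailV J m = M J.
  move: J; apply: tailV_rec => J; first by rewrite size_mkseq => /M_oversize.
  by rewrite vcoef_m subnK.
exists m; split; first by exists M; split=> J; [apply: MP | apply: vcoef_m].
move=> J; rewrite tailV_m; have [[v Av <-] _] := MP J; exact: A_le_g.
Qed.

End MaxV.

Definition binsum n t := \sum_(j < t) 'C(n, j).

Lemma binsumSS n t : binsum n.+1 t.+1 = binsum n t.+1 + binsum n t.
Proof.
rewrite /binsum !big_ord_recl !bin0 -addnA; congr (_ + _).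
by rewrite -big_split; apply: eq_bigr => j _; rewrite binS.
Qed.

Lemma binsum0 t : binsum 0 t.+1 = 1.
Proof. by rewrite /binsum big_ord_recl bin0 big1 // => j _; rewrite bin0n. Qed.

Lemma card_imset_split (T U : finType) (f : T -> U) (A : {set T}) (P : pred T) :
    {in [set x in A | P x] &, injective f} -> {in [set x in A | ~~ P x] &, injective f} ->
  #|A| = #|[set f x | x in A & P x] :|: [set f x | x in A & ~~ P x]|
         + #|[set f x | x in A & P x] :&: [set f x | x in A & ~~ P x]|.
Proof.
move=> f_injP f_injN; rewrite cardsUI !card_in_imset // -(cardID P A).
by congr (_ + _); apply: eq_card => x; rewrite !inE // andbC.
Qed.

Section Patterns.
Variable n' : nat.
Implicit Types s : {ffun 'I_n' -> bool}.

Definition zeros s : nat := \sum_(i < n') ~~ s i.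

Lemma weight_le s : weight s <= n'.
Proof. by rewrite /weight -[X in _ <= X]card_ord max_card. Qed.

Lemma weight_add_zeros s : weight s + zeros s = n'.
Proof.
rewrite /weight /zeros -sum1_card big_mkcond -big_split /= -[RHS]card_ord -sum1_card.
by apply: eq_bigr => i _; rewrite inE; case: (s i).
Qed.

Lemma vcoef_Hist (S : {set {ffun 'I_n' -> bool}}) j :
  vcoef (Hist S) j = #|[set s in S | weight s == j]|.
Proof.
rewrite /vcoef; have [lt_j_n' | le_n'_j] := ltnP j n'.+1; first by rewrite nth_mkseq.
rewrite nth_default ?size_mkseq //; apply/esym/eq_card0 => s; rewrite !inE.
by have := weight_le s; case: (s \in S); lia.
Qed.

Lemma tailV_Hist (S : {set {ffun 'I_n' -> bool}}) J :
  tailV J (Hist S) = #|[set s in S | J <= weight s]|.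
Proof.
move: J; apply: tailV_rec => J.
  rewrite size_mkseq => lt_n'_J; apply/eq_card0 => s; rewrite !inE.
  by have := weight_le s; case: (s \in S); lia.
rewrite vcoef_Hist -(cardID [pred s | weight s == J] [set s in S | J <= weight s]).
by congr (_ + _); apply: eq_card => s; rewrite !inE; case: (s \in S); lia.
Qed.

End Patterns.

Definition behead_pat n' (s : {ffun 'I_n'.+1 -> bool}) : {ffun 'I_n' -> bool} :=
  [ffun i => s (lift ord0 i)].

Lemma zeros_behead n' (s : {ffun 'I_n'.+1 -> bool}) :
  zeros s = ~~ s ord0 + zeros (behead_pat s).
Proof. by rewrite /zeros big_ord_recl; congr (_ + _); apply: eq_bigr => i _; rewrite ffunE. Qed.

Lemma zeros_behead_le n' (s : {ffun 'I_n'.+1 -> bool}) : zeros (behead_pat s) <= zeros s.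
Proof. by rewrite [zeros s]zeros_behead leq_addl. Qed.

Lemma behead_pat_inj n' (s t : {ffun 'I_n'.+1 -> bool}) :
  s ord0 = t ord0 -> behead_pat s = behead_pat t -> s = t.
Proof.
move=> st0 /ffunP st; apply/ffunP => i; have [j ->|->] := unliftP ord0 i => //.
by have := st j; rewrite !ffunE.
Qed.

Section Layers.
Variable R : realType.
Local Open Scope ring_scope.

Definition affine n (w : 'I_n -> R) (c : R) (x : 'I_n -> R) : R :=
  \sum_(k < n) x k * w k + c.

Definition lerp n (x y : 'I_n -> R) (t : R) : 'I_n -> R := fun k => x k + t * (y k - x k).

Lemma affine_lerp n (w x y : 'I_n -> R) c t :
  affine w c (lerp x y t) = affine w c x + t * (affine w c y - affine w c x).
Proof.
rewrite /affine; have -> : \sum_(k < n) lerp x y t k * w k =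
    \sum_(k < n) x k * w k + t * (\sum_(k < n) y k * w k - \sum_(k < n) x k * w k).
  by rewrite -sumrB mulr_sumr -big_split /=; apply: eq_bigr => k _; rewrite /lerp; ring.
ring.
Qed.

Lemma affine_lerp_root n (w x y : 'I_n -> R) c :
    0 < affine w c x -> affine w c y <= 0 ->
  exists t, [/\ 0 < t, t <= 1 & affine w c (lerp x y t) = 0].
Proof.
move=> x_pos y_npos; have gap_pos : 0 < affine w c x - affine w c y by lra.
exists (affine w c x / (affine w c x - affine w c y)); split.
- by rewrite divr_gt0.
- by rewrite ler_pdivrMr // mul1r; lra.
- by rewrite affine_lerp; field; lra.
Qed.

Lemma lerp_gt0 (u v t : R) : 0 < t -> t <= 1 -> (0 < u) = (0 < v) ->
  (0 < u + t * (v - u)) = (0 < u).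
Proof.
move=> t_pos t_le1; have [u_pos | u_npos] := ltrP 0 u => uv.
  have v_pos : 0 < v by rewrite -uv.
  by apply/idP; nra.
have v_npos : v <= 0 by rewrite leNgt -uv.
by apply/negbTE; rewrite -leNgt; nra.
Qed.

Lemma affine_on_hyperplane n n' (W : 'I_n' -> 'I_n -> R) (b : 'I_n' -> R)
    (w0 : 'I_n -> R) (c0 : R) (j0 : 'I_n) : w0 j0 != 0 ->
  exists (W' : 'I_n' -> 'I_n.-1 -> R) (b' : 'I_n' -> R), forall z : 'I_n -> R,
    affine w0 c0 z = 0 -> forall i, affine (W' i) (b' i) (z \o lift j0) = affine (W i) (b i) z.
Proof.
move=> w0j0_neq0.
exists (fun i j => W i (lift j0 j) - W i j0 * w0 (lift j0 j) / w0 j0).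
exists (fun i => b i - W i j0 * c0 / w0 j0).
move=> z; rewrite /affine (bigD1_ord j0) //= => z_on_hyperplane i.
rewrite (bigD1_ord j0) //=.
set Sw := \sum_(j < n.-1) z (lift j0 j) * w0 (lift j0 j) in z_on_hyperplane.
have -> : \sum_(j < n.-1) z (lift j0 j) * (W i (lift j0 j) - W i j0 * w0 (lift j0 j) / w0 j0)
    = \sum_(j < n.-1) z (lift j0 j) * W i (lift j0 j) - W i j0 / w0 j0 * Sw.
  by rewrite /Sw mulr_sumr -sumrB; apply: eq_bigr => j _; ring.
have -> : z j0 = - (Sw + c0) / w0 j0.
  apply: (mulIf w0j0_neq0); rewrite divfK //; apply/eqP.
  by rewrite -subr_eq0 -z_on_hyperplane; apply/eqP; ring.
by field.
Qed.

Lemma pattern_affine n n' (W : 'I_n' -> 'I_n -> R) b x i :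
  pattern W b x i = (0 < affine (W i) (b i) x).
Proof. by rewrite ffunE. Qed.

Lemma patternsP n n' (W : 'I_n' -> 'I_n -> R) b s :
  reflect (exists x, pattern W b x = s) (s \in patterns W b).
Proof. by rewrite inE; apply: asboolP. Qed.

Lemma behead_pattern n n' (W : 'I_n'.+1 -> 'I_n -> R) b x :
  behead_pat (pattern W b x) = pattern (W \o lift ord0) (b \o lift ord0) x.
Proof. by apply/ffunP => i; rewrite !ffunE. Qed.

Definition patterns_zeros_le n n' (W : 'I_n' -> 'I_n -> R) b k :=
  [set s in patterns W b | (zeros s <= k)%N].

Section Behead.
Variables (n n' k : nat) (W : 'I_n'.+1 -> 'I_n -> R) (b : 'I_n'.+1 -> R).

Definition beheads_on := [set behead_pat s | s in patterns_zeros_le W b k & s ord0].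
Definition beheads_off := [set behead_pat s | s in patterns_zeros_le W b k & ~~ s ord0].

Lemma card_patterns_zeros_le_split :
  #|patterns_zeros_le W b k|
  = (#|beheads_on :|: beheads_off| + #|beheads_on :&: beheads_off|)%N.
Proof.
apply: card_imset_split => s t; rewrite !inE => /andP[_ s0] /andP[_ t0].
  by apply: behead_pat_inj; rewrite s0 t0.
by apply: behead_pat_inj; rewrite (negbTE s0) (negbTE t0).
Qed.

Lemma beheads_subset :
  beheads_on :|: beheads_off \subset patterns_zeros_le (W \o lift ord0) (b \o lift ord0) k.
Proof.
apply/subsetP => s' s'_in.
have [s s_in ->] : exists2 s, s \in patterns_zeros_le W b k & s' = behead_pat s.
  by case/setUP: s'_in => /imsetP[s]; rewrite inE => /andP[s_in _] ->; exists s.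
move: s_in; rewrite !inE => /andP[/asboolP[x <-] zeros_le].
apply/andP; split; last exact: leq_trans (zeros_behead_le _) zeros_le.
by apply/asboolP; exists x; rewrite behead_pattern.
Qed.

Lemma mem_beheads_on s' : s' \in beheads_on ->
  exists2 x, 0 < affine (W ord0) (b ord0) x & pattern (W \o lift ord0) (b \o lift ord0) x = s'.
Proof.
case/imsetP=> s; rewrite !inE => /andP[/andP[/asboolP[x <-] _] on0] ->.
by exists x; rewrite -?pattern_affine ?behead_pattern.
Qed.

Lemma mem_beheads_off s' : s' \in beheads_off ->
  exists2 x, affine (W ord0) (b ord0) x <= 0 & pattern (W \o lift ord0) (b \o lift ord0) x = s'.
Proof.
case/imsetP=> s; rewrite !inE => /andP[/andP[/asboolP[x <-] _] off0] ->.
by exists x; rewrite ?leNgt -?pattern_affine ?behead_pattern.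
Qed.

Lemma zeros_beheads_off s' : s' \in beheads_off -> (zeros s' < k)%N.
Proof.
case/imsetP=> s; rewrite !inE => /andP[/andP[_ zeros_le] off0] ->.
by rewrite zeros_behead (negbTE off0) in zeros_le.
Qed.

Lemma card_beheads_inter
    (IH : forall W' b',
       (#|@patterns_zeros_le n.-1 n' W' b' k.-1| <= binsum n' (minn n.-1 k.-1).+1)%N) :
  (#|beheads_on :&: beheads_off| <= binsum n' (minn n k))%N.
Proof.
case: (pickP (fun j => W ord0 j != 0)) => [j0 w0j0_neq0 | w0_eq0]; last first.
  have affine_w0 x : affine (W ord0) (b ord0) x = b ord0.
    by rewrite /affine big1 ?add0r // => j _; have /negbFE/eqP-> := w0_eq0 j; rewrite mulr0.
  rewrite (_ : _ :&: _ = set0) ?cards0 //; apply/setP => s'; rewrite !inE.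
  apply/negP => /andP[/mem_beheads_on[x1 x1_pos _] /mem_beheads_off[x0 x0_npos _]].
  by move: x1_pos x0_npos; rewrite !affine_w0 => /lt_geF->.
have [k0 | k_pos] := posnP k.
  rewrite (_ : _ :&: _ = set0) ?cards0 //; apply/setP => s'; rewrite !inE.
  by apply/negP => /andP[_ /zeros_beheads_off]; rewrite k0.
have [W' [b' W'_on_hyperplane]] :=
  affine_on_hyperplane (W \o lift ord0) (b \o lift ord0) (b ord0) w0j0_neq0.
have -> : minn n k = (minn n.-1 k.-1).+1 by have := ltn_ord j0; lia.
apply: (leq_trans _ (IH W' b')); apply: subset_leq_card; apply/subsetP => s'.
move=> /setIP[/mem_beheads_on[x1 x1_pos x1_s'] s'_off].
have [x0 x0_npos x0_s'] := mem_beheads_off s'_off.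
have [t [t_pos t_le1 lerp_root]] := affine_lerp_root x1_pos x0_npos.
rewrite inE; apply/andP; split; last by have := zeros_beheads_off s'_off; lia.
apply/patternsP; exists (lerp x1 x0 t \o lift j0); apply/ffunP => i.
rewrite pattern_affine W'_on_hyperplane // affine_lerp lerp_gt0 //.
  by rewrite -x1_s' pattern_affine.
by rewrite -!pattern_affine x1_s' x0_s'.
Qed.

End Behead.

Lemma card_patterns_zeros_le n' n (W : 'I_n' -> 'I_n -> R) b k :
  (#|patterns_zeros_le W b k| <= binsum n' (minn n k).+1)%N.
Proof.
elim: n' n W b k => [|n' IH] n W b k.
  by rewrite binsum0 (leq_trans (max_card _)) // card_ffun card_bool card_ord.
rewrite card_patterns_zeros_le_split binsumSS leq_add ?card_beheads_inter //.
exact: leq_trans (subset_leq_card (beheads_subset _ _ _)) (IH _ _ _ _).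
Qed.

Lemma binsum_le_tailV_gammaB n n' J : (J <= n')%N ->
  (binsum n' (minn n (n' - J)).+1 <= tailV J (gammaB n n'))%N.
Proof.
move=> le_J_n'; rewrite tailV_gammaB /binsum.
rewrite (big_ord_widen n.+1 (fun j => 'C(n', j)) (_ : _ < n.+1)%N) ?ltnS ?geq_minl //.
by rewrite big_mkcond; apply: leq_sum => j _; case: ifP; lia.
Qed.

Lemma card_patterns_weight_ge n n' (W : 'I_n' -> 'I_n -> R) b J :
  (#|[set s in patterns W b | J <= weight s]| <= tailV J (gammaB n n'))%N.
Proof.
have [lt_n'_J | le_J_n'] := ltnP n' J.
  rewrite (_ : [set _ in _ | _] = set0) ?cards0 //; apply/setP => s; rewrite !inE.
  by have := weight_le s; case: (s \in patterns W b); lia.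
apply: leq_trans (binsum_le_tailV_gammaB n le_J_n').
apply: leq_trans (card_patterns_zeros_le W b (n' - J)); apply: subset_leq_card.
apply/subsetP => s; rewrite !inE.
by have := weight_add_zeros s; case: (s \in patterns W b); lia.
Qed.

Lemma leV_HvalsRL_gammaB n n' v : HvalsRL R n n' v -> leV v (gammaB n n').
Proof.
rewrite /HvalsRL; case: eqP => [_ -> | _ [W [b ->]]] J; last first.
  by rewrite tailV_Hist card_patterns_weight_ge.
rewrite tailV_eV tailV_gammaB big_ord_recl bin0 subn0.
by case: J => //= J; rewrite leqn0.
Qed.

Lemma HvalsRL_nonempty n n' : exists v, HvalsRL R n n' v.
Proof.
rewrite /HvalsRL; case: eqP => _; first by exists (eV 0).
by exists (Hist (patterns (fun (_ : 'I_n') (_ : 'I_n) => 0 : R) (fun _ => 0))); do 2 eexists.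
Qed.

Lemma size_HvalsRL n n' v : HvalsRL R n n' v -> (size v <= n'.+1)%N.
Proof.
by rewrite /HvalsRL; case: eqP => [_ -> | _ [W [b ->]]]; rewrite ?size_eV ?size_mkseq.
Qed.

End Layers.

Theorem mainTheorem9 (R : realType) : InGamma R gammaB.
Proof.
split=> [n' n _ _ | n' n nt _ /andP[le_n_nt _]]; last exact: leV_gammaB.
exact: IsMaxV_exists (@HvalsRL_nonempty R n n') (@size_HvalsRL R n n')
                     (@leV_HvalsRL_gammaB R n n').
Qed.
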